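(* Let $\boldsymbol{\tau} \colon \mathsf{BPT} \to \mathbb K$ be a weighted troupe. For $n \geq 1$, let \[\omega_n = \sum_{T \in \mathsf{Branch}_n} \boldsymbol{\tau}(T)\quad\text{and}\quad\check{\omega}_n = \sum_{T \in \mathsf{BPT}_n} \boldsymbol{\tau}(T).\] Let \[\mathscr B(t) = \sum_{n \geq 1} \omega_n t^n\quad\text{and}\quad \mathscr T(t) = \sum_{n \geq 1} \check{\omega}_n t^n.\] Then $\mathscr B(t)$ is algebraic over $\mathbb K[t]$ if and only if $\mathscr T(t)$ is.
   Context: $\mathbb K$ is a commutative ring. $\mathsf{BPT}$ is the set of binary plane trees (rooted trees where each child is designated left or right, each vertex having at most one left and one right child), including the empty tree $\varnothing$; $\mathsf{BPT}_n$ is the set of those with $n$ vertices. A branch is a nonempty binary plane tree in which every vertex has at most one child; $\mathsf{Branch}_n$ is the set of branches with $n$ vertices. For nonempty binary plane trees $T_1,T_2$ and a vertex $v$ of $T_1$, the insertion $\nabla_v(T_1,T_2)$ is obtained by extending $v$ into a left edge (identifying $v$ with the bottom vertex and calling the new upper vertex $v^*$) and attaching $T_2$ as the right subtree of $v^*$. A weighted troupe is a function $\boldsymbol{\tau}\colon\mathsf{BPT}\to\mathbb K$ with $\boldsymbol{\tau}(\varnothing)=0$ and $\boldsymbol{\tau}(\nabla_v(T_1,T_2))=\boldsymbol{\tau}(T_1)\boldsymbol{\tau}(T_2)$ for all $T_1,T_2$ and all vertices $v\in T_1$. It is known (previous theorem) that $\mathscr T(t) = \mathscr B\left(\frac{t}{1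 - t\mathscr T(t)}\right)$. *)

From HB Require Import structures.
From mathcomp Require Import all_boot all_order all_algebra.
Set Implicit Arguments. Unset Strict Implicit. Unset Printing Implicit Defensive.
Import GRing.Theory.
Local Open Scope ring_scope.

(** Binary plane trees: [Leaf] is the empty tree; [Node l r] is a root with
    left subtree [l] and right subtree [r] (empty subtree = no child). *)
Inductive bpt : Type := Leaf | Node of bpt & bpt.

Fixpoint bsize (t : bpt) : nat :=
  match t with Leaf => 0%N | Node l r => (bsize l + bsize r).+1 end.

Fixpoint is_branch (t : bpt) : bool :=
  match t with
  | Leaf => false
  | Node Leaf Leaf => true
  | Node l Leaf => is_branch l
  | Node Leaf r => is_branch r
  | Node _ _ => false
  end.

(** [ins T2 T1 T] : T = nabla_v(T1, T2) for some vertex v of T1.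
    The subtree S rooted at v is replaced by a new vertex v* whose left
    subtree is S (rooted at v) and whose right subtree is T2. *)
Inductive ins (T2 : bpt) : bpt -> bpt -> Prop :=
| ins_here l r : ins T2 (Node l r) (Node (Node l r) T2)
| ins_left l r l' : ins T2 l l' -> ins T2 (Node l r) (Node l' r)
| ins_right l r r' : ins T2 r r' -> ins T2 (Node l r) (Node l r').

Definition weighted_troupe (K : comNzRingType) (tau : bpt -> K) : Prop :=
  tau Leaf = 0 /\
  forall T1 T2 T, T1 <> Leaf -> T2 <> Leaf -> ins T2 T1 T ->
    tau T = tau T1 * tau T2.

Fixpoint trees_upto (h : nat) : seq bpt :=
  match h with
  | 0%N => [:: Leaf]
  | h'.+1 => Leaf :: [seq Node l r | l <- trees_upto h', r <- trees_upto h']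
  end.

(** BPT_n, listed without repetition (a tree with n vertices has height <= n). *)
Definition BPT_n (n : nat) : seq bpt := [seq t <- trees_upto n | bsize t == n].
Definition Branch_n (n : nat) : seq bpt := [seq t <- BPT_n n | is_branch t].

Definition omega (K : comNzRingType) (tau : bpt -> K) (n : nat) : K :=
  \sum_(T <- Branch_n n) tau T.
Definition omega_check (K : comNzRingType) (tau : bpt -> K) (n : nat) : K :=
  \sum_(T <- BPT_n n) tau T.

Definition fps (K : comNzRingType) := nat -> K.

Definition fps_mul (K : comNzRingType) (f g : fps K) : fps K :=
  fun n => \sum_(i < n.+1) f i * g (n - i)%N.
Definition fps_one (K : comNzRingType) : fps K := fun n => if n == 0%N then 1 else 0.
Definition fps_exp (K : comNzRingType) (f : fps K) (k : nat) : fps K :=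
  iter k (fps_mul f) (@fps_one K).
Definition fps_of_poly (K : comNzRingType) (p : {poly K}) : fps K := fun n => p`_n.

(** Evaluation of P(t, y) in K[t][y] at y = f, as a power series. *)
Definition fps_eval (K : comNzRingType) (P : {poly {poly K}}) (f : fps K) : fps K :=
  fun n => \sum_(i < size P) fps_mul (fps_of_poly P`_i) (fps_exp f i) n.

Definition fps_algebraic (K : comNzRingType) (f : fps K) : Prop :=
  exists P : {poly {poly K}}, P != 0 /\ forall n, fps_eval P f n = 0.

Definition seriesB (K : comNzRingType) (tau : bpt -> K) : fps K :=
  fun n => if n == 0%N then 0 else omega tau n.
Definition seriesT (K : comNzRingType) (tau : bpt -> K) : fps K :=
  fun n => if n == 0%N then 0 else omega_check tau n.

(* Let u = t / (1 - t T(t)).  Split a tree hung below the branch spelled by a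
   word w at its root: either it prolongs the branch, or both subtrees are
   nonempty and the troupe axiom factors its weight as tau(w[l]) tau(r).  Hence
   the series F_w of such trees satisfies F_w = t (c_w + F_wL + F_wR + F_w T),
   where c_w is the weight of the branch w itself, i.e.
   F_w = u (c_w + F_wL + F_wR); the branch series satisfy the same recursion
   with t in place of u.  Unfolding both gives B = sum_k s_k t^(k+1) and
   T = sum_k s_k u^(k+1), with s_k the sum of c_w over words of length k; so
   T = B o u.
   Composition with u is an injective ring morphism, and t = u (1 - t T),
   u = t (1 + u T).  So an annihilating polynomial P(t, Y) of one series gives
   one of the other by clearing denominators in P(t / (1 + s t Y), Y), s = -1 or
   1.  This leaves P(0, Y) unchanged, so the result is nonzero once P has been
   divided by the largest power of t dividing it. *)

From HB Require Import structures.
From mathcomp Require Import all_boot all_order all_algebra.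
From mathcomp Require Import boolp zify ring.
Set Implicit Arguments. Unset Strict Implicit. Unset Printing Implicit Defensive.
Import GRing.Theory.
Local Open Scope ring_scope.

(** * The ring of formal power series *)

Section PowerSeriesRing.
Variable K : comNzRingType.
Implicit Types (f g h u w : fps K) (p q : {poly K}).

Lemma fpsP f g : (forall n, f n = g n) -> f = g.
Proof. exact: funext. Qed.

HB.instance Definition _ := gen_eqMixin (fps K).
HB.instance Definition _ := gen_choiceMixin (fps K).

Definition fps_add f g : fps K := fun n => f n + g n.
Definition fps_opp f : fps K := fun n => - f n.

Lemma fps_addA : associative fps_add.
Proof. by move=> f g h; apply: fpsP => n; apply: addrA. Qed.
Lemma fps_addC : commutative fps_add.
Proof. by move=> f g; apply: fpsP => n; apply: addrC. Qed.
Lemma fps_add0 : left_id (fun=> 0) fps_add.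
Proof. by move=> f; apply: fpsP => n; apply: add0r. Qed.
Lemma fps_addN : left_inverse (fun=> 0) fps_opp fps_add.
Proof. by move=> f; apply: fpsP => n; apply: addNr. Qed.

HB.instance Definition _ :=
  GRing.isZmodule.Build (fps K) fps_addA fps_addC fps_add0 fps_addN.

Definition fps_trunc N f : {poly K} := \poly_(i < N) f i.

Lemma coefM_eq n p q p' q' :
  (forall i, (i <= n)%N -> p`_i = p'`_i) -> (forall i, (i <= n)%N -> q`_i = q'`_i) ->
  (p * q)`_n = (p' * q')`_n.
Proof.
move=> eq_p eq_q; rewrite !coefM; apply: eq_bigr => i _.
by rewrite eq_p ?eq_q ?leq_subr // -ltnS.
Qed.

Lemma fps_mul_trunc N f g n :
  (n < N)%N -> fps_mul f g n = (fps_trunc N f * fps_trunc N g)`_n.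
Proof.
move=> ltnN; rewrite coefM; apply: eq_bigr => -[i lein] _ /=.
by rewrite !coef_poly ifT ?ifT //; lia.
Qed.

Lemma coef_trunc_mul N f g i :
  (i < N)%N -> (fps_trunc N (fps_mul f g))`_i = (fps_trunc N f * fps_trunc N g)`_i.
Proof. by move=> ltiN; rewrite coef_poly ltiN (fps_mul_trunc _ _ ltiN). Qed.

Lemma fps_mulA : associative (@fps_mul K).
Proof.
move=> f g h; apply: fpsP => n; rewrite !(fps_mul_trunc _ _ (ltnSn n)).
transitivity ((fps_trunc n.+1 f * (fps_trunc n.+1 g * fps_trunc n.+1 h))`_n).
  by apply: coefM_eq => // i lein; rewrite coef_trunc_mul.
by rewrite mulrA; apply: coefM_eq => // i lein; rewrite coef_trunc_mul.
Qed.

Lemma fps_mulC : commutative (@fps_mul K).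
Proof. by move=> f g; apply: fpsP => n; rewrite !(fps_mul_trunc _ _ (ltnSn n)) mulrC. Qed.

Lemma fps_trunc1 N : (0 < N)%N -> fps_trunc N (@fps_one K) = 1.
Proof.
move=> N_gt0; apply/polyP => i; rewrite coef_poly coef1 /fps_one.
by case: i => [|i]; rewrite ?N_gt0 //; case: ifP.
Qed.

Lemma fps_mul1 : left_id (@fps_one K) (@fps_mul K).
Proof.
move=> f; apply: fpsP => n.
by rewrite (fps_mul_trunc _ _ (ltnSn n)) fps_trunc1 // mul1r coef_poly ltnSn.
Qed.

Lemma fps_truncD N : {morph fps_trunc N : f g / f + g}.
Proof. by move=> f g; apply/polyP => i; rewrite coefD !coef_poly; case: ifP; rewrite ?addr0. Qed.

Lemma fps_mulDl : left_distributive (@fps_mul K) +%R.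
Proof.
move=> f g h; apply: fpsP => n.
rewrite [LHS](fps_mul_trunc _ _ (ltnSn n)) fps_truncD mulrDl coefD.
by rewrite -!(fps_mul_trunc _ _ (ltnSn n)).
Qed.

Lemma fps_one_neq0 : @fps_one K != 0.
Proof. by apply/eqP => /(congr1 (fun f => f 0%N)) /eqP; rewrite oner_eq0. Qed.

HB.instance Definition _ :=
  GRing.Zmodule_isComNzRing.Build (fps K) fps_mulA fps_mulC fps_mul1 fps_mulDl fps_one_neq0.

Lemma fps_truncB N : {morph fps_trunc N : f g / f - g}.
Proof.
by move=> f g; apply/polyP => i; rewrite coefB !coef_poly; case: ifP; rewrite ?subr0.
Qed.

Lemma fpsD f g n : (f + g) n = f n + g n. Proof. by []. Qed.
Lemma fpsB f g n : (f - g) n = f n - g n. Proof. by []. Qed.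
Lemma fps0 n : (0 : fps K) n = 0. Proof. by []. Qed.
Lemma fps1 n : (1 : fps K) n = (n == 0%N)%:R.
Proof. by rewrite [1]/(@fps_one K) /fps_one; case: eqP. Qed.
Lemma fpsM f g n : (f * g) n = \sum_(i < n.+1) f i * g (n - i)%N. Proof. by []. Qed.
Lemma fps_sum I (r : seq I) (P : pred I) (F : I -> fps K) n :
  (\sum_(i <- r | P i) F i) n = \sum_(i <- r | P i) F i n.
Proof. by elim/big_rec2: _ => // i y1 y2 _ <-. Qed.
Lemma fps_expE f k : fps_exp f k = f ^+ k.
Proof. by elim: k => [|k IHk] //; rewrite exprS -IHk. Qed.

Definition eqmodX N f g := forall n, (n < N)%N -> f n = g n.

Lemma eqmodXM N f f' g g' : eqmodX N f f' -> eqmodX N g g' -> eqmodX N (f * g) (f' * g').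
Proof.
move=> eq_f eq_g n ltnN; rewrite !fpsM; apply: eq_bigr => -[i lein] _ /=.
by rewrite eq_f ?eq_g //; lia.
Qed.

Lemma eqmodXMr N f g : eqmodX N g 0 -> eqmodX N (f * g) 0.
Proof. by move=> g0; rewrite -(mulr0 f); apply: eqmodXM. Qed.

Lemma eqmodX0M a b f g : eqmodX a f 0 -> eqmodX b g 0 -> eqmodX (a + b) (f * g) 0.
Proof.
move=> f0 g0 n ltn; rewrite fpsM fps0; apply: big1 => -[i lein] _ /=.
by case: (ltnP i a) => [/f0 -> | leai]; rewrite ?mul0r // g0 ?mulr0 //; lia.
Qed.

Lemma eqmodX_exp f k : f 0%N = 0 -> eqmodX k (f ^+ k) 0.
Proof.
move=> f0; elim: k => [|k IHk]; first by [].
by rewrite exprS -add1n; apply: eqmodX0M => // -[].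
Qed.

End PowerSeriesRing.

(** * Evaluation and composition *)

Section Composition.
Variable K : comNzRingType.
Implicit Types (f g u w : fps K) (p q : {poly K}).

Lemma coef_trunc_poly N p i : (i < N)%N -> (fps_trunc N (fps_of_poly p))`_i = p`_i.
Proof. by move=> ltiN; rewrite coef_poly ltiN. Qed.

Lemma fps_of_poly_is_zmod_morphism : zmod_morphism (@fps_of_poly K).
Proof. by move=> p q; apply: fpsP => n; rewrite fpsB /fps_of_poly coefB. Qed.

Lemma fps_of_poly_is_monoid_morphism : monoid_morphism (@fps_of_poly K).
Proof.
split; first by apply: fpsP => n; rewrite fps1 /fps_of_poly coef1.
by move=> p q; apply: fpsP => n; rewrite fpsM /fps_of_poly coefM.
Qed.

HB.instance Definition _ := GRing.isZmodMorphism.Build {poly K} (fps K) (@fps_of_poly K)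
  fps_of_poly_is_zmod_morphism.
HB.instance Definition _ := GRing.isMonoidMorphism.Build {poly K} (fps K) (@fps_of_poly K)
  fps_of_poly_is_monoid_morphism.

Definition fpsC : K -> fps K := @fps_of_poly K \o polyC.
HB.instance Definition _ := GRing.RMorphism.on fpsC.

Lemma fpsCE c n : fpsC c n = if n == 0%N then c else 0.
Proof. exact: coefC. Qed.

Lemma fpsCM c f n : (fpsC c * f) n = c * f n.
Proof.
rewrite fpsM big_ord_recl fpsCE eqxx subn0 big1 ?addr0 // => i _.
by rewrite fpsCE mul0r.
Qed.

Definition fpsX : fps K := fps_of_poly 'X.

Lemma fpsXM f n : (fpsX * f) n = if n is m.+1 then f m else 0.
Proof.
rewrite fpsM /fpsX /fps_of_poly; case: n => [|n]; first by rewrite big_ord1 coefX mul0r.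
rewrite 2!big_ord_recl big1 => [|i _]; last by rewrite coefX mul0r.
by rewrite !coefX mul0r mul1r add0r addr0 subn1.
Qed.

Lemma lreg_fpsX : GRing.lreg fpsX.
Proof.
move=> f g eq_fg; apply: fpsP => n.
by have := congr1 (fun h : fps K => h n.+1) eq_fg; rewrite !fpsXM.
Qed.

Definition fps_horner (u : fps K) : {poly K} -> fps K :=
  horner_eval u \o map_poly fpsC.
HB.instance Definition _ u := GRing.isZmodMorphism.Build {poly K} (fps K)
  (fps_horner u) (rmorphB (horner_eval u \o map_poly fpsC)).
HB.instance Definition _ u := GRing.isMonoidMorphism.Build {poly K} (fps K)
  (fps_horner u) (rmorphism_monoidP (horner_eval u \o map_poly fpsC)).

Lemma fps_hornerE u p : fps_horner u p = (map_poly fpsC p).[u].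
Proof. by []. Qed.

Lemma fps_hornerC u c : fps_horner u c%:P = fpsC c.
Proof. by rewrite fps_hornerE map_polyC hornerC. Qed.

Lemma fps_hornerX u : fps_horner u 'X = u.
Proof. by rewrite fps_hornerE map_polyX hornerX. Qed.

Lemma fps_horner_coef N u p : (size p <= N)%N ->
  fps_horner u p = \sum_(i < N) fpsC p`_i * u ^+ i.
Proof.
move=> le_pN; rewrite fps_hornerE (@horner_coef_wide _ N).
  by apply: eq_bigr => i _; rewrite coef_map.
exact: leq_trans (size_poly _ _) le_pN.
Qed.

Lemma fps_horner_fpsX p : fps_horner fpsX p = fps_of_poly p.
Proof.
elim/poly_ind: p => [|p c IHp]; first by rewrite !rmorph0.
by rewrite !rmorphD !rmorphM /= IHp fps_hornerX fps_hornerC.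
Qed.

Lemma fps_horner_eqmodX N u p q : u 0%N = 0 ->
  (forall i, (i < N)%N -> p`_i = q`_i) -> eqmodX N (fps_horner u p) (fps_horner u q).
Proof.
move=> u0 eq_pq n ltnN; apply/eqP; rewrite -subr_eq0 -fpsB -rmorphB.
rewrite -(poly_take_drop N (p - q)).
have -> : take_poly N (p - q) = 0.
  apply/polyP => i; rewrite coef_take_poly coef0 coefB.
  by case: ifP => // /eq_pq ->; rewrite subrr.
rewrite add0r rmorphM rmorphXn /= fps_hornerX.
by rewrite (eqmodXMr _ (eqmodX_exp (k := N) u0) ltnN).
Qed.

(* The constant term of [u] is discarded, so that [fps_comp u] is a ring
   morphism for every [u]. *)
Definition fps_comp (u f : fps K) : fps K :=
  fun n => fps_horner (u - fpsC (u 0%N)) (fps_trunc n.+1 f) n.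

Lemma fps_compE N u f n : (n < N)%N ->
  fps_comp u f n = fps_horner (u - fpsC (u 0%N)) (fps_trunc N f) n.
Proof.
move=> ltnN; apply: (@fps_horner_eqmodX n.+1) => //.
  by rewrite fpsB fpsCE subrr.
by move=> i ltin; rewrite !coef_poly ltin (leq_trans ltin ltnN).
Qed.

Lemma fps_comp_is_zmod_morphism u : zmod_morphism (fps_comp u).
Proof. by move=> f g; apply: fpsP => n; rewrite fpsB /fps_comp fps_truncB rmorphB. Qed.

Lemma fps_comp_is_monoid_morphism u : monoid_morphism (fps_comp u).
Proof.
split; first by apply: fpsP => n; rewrite /fps_comp fps_trunc1 // rmorph1.
move=> f g; apply: fpsP => n; rewrite /fps_comp.
rewrite (@fps_horner_eqmodX n.+1 _ _ (fps_trunc n.+1 f * fps_trunc n.+1 g)) //.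
- rewrite rmorphM; apply: eqmodXM (ltnSn n) => m ltmn; exact/esym/fps_compE.
- by rewrite fpsB fpsCE subrr.
- by move=> i ltin; rewrite coef_trunc_mul.
Qed.

HB.instance Definition _ u := GRing.isZmodMorphism.Build (fps K) (fps K) (fps_comp u)
  (fps_comp_is_zmod_morphism u).
HB.instance Definition _ u := GRing.isMonoidMorphism.Build (fps K) (fps K) (fps_comp u)
  (fps_comp_is_monoid_morphism u).

Lemma fps_comp_poly u p : u 0%N = 0 -> fps_comp u (fps_of_poly p) = fps_horner u p.
Proof.
move=> u0; apply: fpsP => n; rewrite /fps_comp u0 rmorph0 subr0.
by apply: (@fps_horner_eqmodX n.+1) => // i ltin; rewrite coef_trunc_poly.
Qed.

Lemma fps_compX u : u 0%N = 0 -> fps_comp u fpsX = u.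
Proof. by move=> u0; rewrite fps_comp_poly // fps_hornerX. Qed.

Lemma fps_compC u c : fps_comp u (fpsC c) = fpsC c.
Proof.
apply: fpsP => n; rewrite /fps_comp (@fps_horner_eqmodX n.+1 _ _ c%:P) ?fps_hornerC //.
  by rewrite fpsB fpsCE subrr.
by move=> i ltin; rewrite coef_poly ltin.
Qed.

Lemma fps_exp_diag u k : u 0%N = 0 -> (u ^+ k) k = u 1%N ^+ k.
Proof.
move=> u0; elim: k => [|k IHk]; first by rewrite expr0 fps1.
rewrite exprS fpsM big_ord_recl u0 mul0r add0r big_ord_recl /= subSS subn0 IHk.
rewrite big1 ?addr0 -?exprS // => -[i ltik] _ /=.
by rewrite (eqmodX_exp (k := k) u0) ?mulr0 //; rewrite /bump /=; lia.
Qed.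

Lemma fps_comp_coef u f n :
  fps_comp u f n = \sum_(i < n.+1) f i * ((u - fpsC (u 0%N)) ^+ i) n.
Proof.
rewrite /fps_comp (@fps_horner_coef n.+1) ?size_poly // fps_sum.
by apply: eq_bigr => i _; rewrite fpsCM coef_poly ltn_ord.
Qed.

Lemma fps_comp_eq0 u f : u 0%N = 0 -> GRing.lreg (u 1%N) -> fps_comp u f = 0 -> f = 0.
Proof.
move=> u0 reg_u1 comp_f0; apply: fpsP => n; rewrite fps0; elim/ltn_ind: n => n IHn.
have := congr1 (fun g : fps K => g n) comp_f0.
rewrite fps_comp_coef u0 rmorph0 subr0 big_ord_recr big1 /= => [|i _]; last first.
  by rewrite IHn ?mul0r.
rewrite add0r fps_exp_diag // fps0 => /eqP.
by rewrite mulrC mulrI_eq0; [move/eqP | exact: lregX].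
Qed.

Definition fps_geom : fps K := fun=> 1.

Lemma fps_geomE : (1 - fpsX) * fps_geom = 1.
Proof.
apply: fpsP => n; rewrite mulrBl mul1r fpsB fpsXM fps1.
by case: n => [|n]; rewrite /fps_geom ?subr0 ?subrr.
Qed.

Definition fps_inv1B w := fps_comp w fps_geom.

Lemma fps_inv1BE w : w 0%N = 0 -> (1 - w) * fps_inv1B w = 1.
Proof.
move=> w0; rewrite -[w in 1 - w](fps_compX w0) -(rmorph1 (fps_comp w)).
by rewrite -rmorphB -rmorphM fps_geomE rmorph1.
Qed.

Lemma fps_inv1B0 w : fps_inv1B w 0%N = 1.
Proof. by rewrite /fps_inv1B fps_comp_coef big_ord1 expr0 fps1 mulr1. Qed.

End Composition.

Arguments fpsX {K}.

(** * Binary plane trees *)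

Fixpoint bpt_eqb (a b : bpt) : bool :=
  match a, b with
  | Leaf, Leaf => true
  | Node l r, Node l' r' => bpt_eqb l l' && bpt_eqb r r'
  | _, _ => false
  end.

Lemma bpt_eqP : Equality.axiom bpt_eqb.
Proof.
elim=> [|l IHl r IHr] [|l' r'] /=; try by constructor.
apply: (iffP andP) => [[/IHl -> /IHr ->] //|[<- <-]].
by split; [apply/IHl | apply/IHr].
Qed.

HB.instance Definition _ := hasDecEq.Build bpt bpt_eqP.

Fixpoint bheight (t : bpt) : nat :=
  if t is Node l r then (maxn (bheight l) (bheight r)).+1 else 0.

Lemma bheight_le_bsize t : (bheight t <= bsize t)%N.
Proof. by elim: t => [|l IHl r IHr] //=; rewrite ltnS geq_max; apply/andP; split; lia. Qed.

Lemma mem_trees_upto h t : (t \in trees_upto h) = (bheight t <= h)%N.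
Proof.
elim: h t => [|h IHh] [|l r] //=; rewrite in_cons /=.
apply/allpairsP/idP => [[[a b] /= [ha hb [-> ->]]]|].
  by rewrite ltnS geq_max -!IHh ha hb.
by rewrite ltnS geq_max -!IHh => /andP[hl hr]; exists (l, r).
Qed.

Lemma uniq_trees_upto h : uniq (trees_upto h).
Proof.
elim: h => [|h IHh] //=; apply/andP; split; first by apply/allpairsP => -[[a b] [_ _]].
by apply: allpairs_uniq => // -[a b] [a' b'] _ _ [-> ->].
Qed.

Lemma mem_BPT_n n t : (t \in BPT_n n) = (bsize t == n).
Proof.
rewrite mem_filter mem_trees_upto.
by case: eqP => // <-; rewrite bheight_le_bsize.
Qed.

Lemma BPT_n_neq_Leaf n t : (0 < n)%N -> t \in BPT_n n -> t <> Leaf.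
Proof. by rewrite mem_BPT_n => n_gt0 /eqP size_t t_Leaf; rewrite -size_t t_Leaf in n_gt0. Qed.

Lemma is_branch_NodeL r : r <> Leaf -> is_branch (Node Leaf r) = is_branch r.
Proof. by case: r. Qed.

Lemma is_branch_NodeR l : l <> Leaf -> is_branch (Node l Leaf) = is_branch l.
Proof. by case: l. Qed.

Lemma is_branch_Node l r : l <> Leaf -> r <> Leaf -> is_branch (Node l r) = false.
Proof. by case: l => // a b _; case: r. Qed.

Lemma BPT_n0 : BPT_n 0 = [:: Leaf].
Proof. by []. Qed.

Lemma BPT_n1 : BPT_n 1 = [:: Node Leaf Leaf].
Proof. by []. Qed.

Section SumsOverTrees.
Variable V : nmodType.
Implicit Type h : bpt -> V.

Lemma big_BPT_n M n h : (n <= M)%N ->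
  \sum_(t <- BPT_n n) h t = \sum_(t <- trees_upto M | bsize t == n) h t.
Proof.
move=> le_nM; rewrite -[RHS]big_filter; apply: perm_big; apply: uniq_perm.
- exact/filter_uniq/uniq_trees_upto.
- exact/filter_uniq/uniq_trees_upto.
move=> t; rewrite mem_BPT_n mem_filter mem_trees_upto.
case: eqP => //= size_t.
by rewrite (leq_trans (bheight_le_bsize t)) // size_t.
Qed.

Lemma big_BPT_Node n h :
  \sum_(t <- BPT_n n.+1) h t =
  \sum_(i < n.+1) \sum_(l <- BPT_n i) \sum_(r <- BPT_n (n - i)) h (Node l r).
Proof.
rewrite (_ : BPT_n n.+1 = [seq t <- [seq Node l r | l <- trees_upto n, r <- trees_upto n]
  | bsize t == n.+1]) // big_filter big_mkcond big_allpairs_dep.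
under [RHS]eq_bigr => i _ do
  rewrite (big_BPT_n _ (leq_ord i)) big_mkcond /=.
rewrite [RHS]exchange_big; apply: eq_bigr => l _ /=.
rewrite -[RHS]big_mkcond; under [RHS]eq_bigl => i do rewrite eq_sym.
rewrite (big_ord1_eq _ (fun i => \sum_(r <- BPT_n (n - i)) h (Node l r))) ltnS.
case: leqP => [le_ln | lt_nl].
  rewrite (big_BPT_n _ (leq_subr _ _)) [RHS]big_mkcond; apply: eq_bigr => r _.
  by congr (if _ then _ else _); apply/eqP/eqP; lia.
by rewrite big1 // => r _; rewrite ifF //; apply/eqP; lia.
Qed.

Lemma big_BPT_Node_split n h :
  \sum_(t <- BPT_n n.+2) h t =
    \sum_(r <- BPT_n n.+1) h (Node Leaf r) + \sum_(l <- BPT_n n.+1) h (Node l Leaf)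
    + \sum_(i < n) \sum_(l <- BPT_n i.+1) \sum_(r <- BPT_n (n - i)) h (Node l r).
Proof.
rewrite big_BPT_Node big_ord_recl big_ord_recr /= subn0 subnn BPT_n0 big_seq1.
rewrite [in LHS](addrC (\sum_(i < n) _)) addrA; congr (_ + _ + _).
by apply: eq_bigr => l _; rewrite big_seq1.
Qed.

End SumsOverTrees.

(** * Trees hanging from a branch *)

(* [plug w T] hangs [T] below the branch spelled by [w], read from the root;
   [true] stands for a left child. *)
Fixpoint plug (w : seq bool) (T : bpt) : bpt :=
  if w is b :: w' then
    if b then Node (plug w' T) Leaf else Node Leaf (plug w' T)
  else T.

Lemma plug_rcons w b T :
  plug (rcons w b) T = plug w (if b then Node T Leaf else Node Leaf T).
Proof. by elim: w => [|c w IHw] //=; rewrite IHw. Qed.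

Lemma ins_plug T2 w T1 T : ins T2 T1 T -> ins T2 (plug w T1) (plug w T).
Proof. by elim: w => [|[] w IHw] //= /IHw; [apply: ins_left | apply: ins_right]. Qed.

Lemma plug_neq_Leaf w T : T <> Leaf -> plug w T <> Leaf.
Proof. by case: w => [|[] w]. Qed.

Fixpoint words (k : nat) : seq (seq bool) :=
  if k is k'.+1 then [seq rcons v b | v <- words k', b <- [:: true; false]]
  else [:: [::]].

Lemma big_words_S (V : nmodType) k (F : seq bool -> V) :
  \sum_(v <- words k.+1) F v = \sum_(v <- words k) (F (rcons v true) + F (rcons v false)).
Proof. by rewrite big_allpairs_dep; apply: eq_bigr => v _; rewrite big_cons big_seq1. Qed.

Lemma unfold_words (R : pzSemiRingType) (a : R) (c Y : seq bool -> R) :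
  (forall w, Y w = a * (c w + (Y (rcons w true) + Y (rcons w false)))) ->
  forall N, Y [::] =
    \sum_(k < N) a ^+ k.+1 * \sum_(v <- words k) c v + a ^+ N * \sum_(v <- words N) Y v.
Proof.
move=> Y_rec; elim=> [|N IHN]; first by rewrite big_ord0 big_seq1 add0r expr0 mul1r.
rewrite IHN big_ord_recr -addrA big_words_S; congr (_ + _).
rewrite (eq_bigr _ (fun v _ => Y_rec v)) -mulr_sumr big_split /=.
by rewrite mulrA -exprSr mulrDr.
Qed.

Section Troupe.
Variables (K : comNzRingType) (tau : bpt -> K).
Hypothesis tau_troupe : weighted_troupe tau.

Lemma tau_plug_Node w l r : l <> Leaf -> r <> Leaf ->
  tau (plug w (Node l r)) = tau (plug w l) * tau r.
Proof.
case: l => [//|a b] _ r_neq0; case: tau_troupe => _ tau_ins.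
by apply: tau_ins => //; [exact: plug_neq_Leaf | exact/ins_plug/ins_here].
Qed.

Definition branch_weight w : fps K := fpsC (tau (plug w (Node Leaf Leaf))).

Definition plugged_trees w : fps K :=
  fun n => if n == 0%N then 0 else \sum_(t <- BPT_n n) tau (plug w t).

Definition plugged_branches w : fps K :=
  fun n => if n == 0%N then 0 else \sum_(t <- BPT_n n | is_branch t) tau (plug w t).

Lemma seriesT_plugged : seriesT tau = plugged_trees [::].
Proof. by []. Qed.

Lemma seriesB_plugged : seriesB tau = plugged_branches [::].
Proof. by apply: fpsP => -[|n] //; rewrite /seriesB /omega /Branch_n big_filter. Qed.

Lemma plugged_trees_rec w :
  plugged_trees w = fpsX * (branch_weight w +
    (plugged_trees (rcons w true) + plugged_trees (rcons w false)) +
    plugged_trees w * plugged_trees [::]).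
Proof.
apply: fpsP => -[|[|n]]; rewrite fpsXM // !fpsD /branch_weight.
  by rewrite fpsM big_ord1 fpsCE /= mul0r !addr0 /plugged_trees BPT_n1 big_seq1.
rewrite fpsCE add0r /plugged_trees /= big_BPT_Node_split; congr (_ + _).
  rewrite addrC; congr (_ + _); apply: eq_bigr => t _; by rewrite plug_rcons.
rewrite fpsM big_ord_recl big_ord_recr /= subnn mul0r mulr0 add0r addr0.
apply: eq_bigr => i _; rewrite /bump /= add1n subSS.
have lt_in := ltn_ord i; rewrite subn_eq0 leqNgt lt_in /=.
rewrite big_distrl; apply: eq_big_seq => l l_in; rewrite big_distrr.
apply: eq_big_seq => r r_in; apply: tau_plug_Node.
  exact: BPT_n_neq_Leaf (ltn0Sn _) l_in.
by apply: BPT_n_neq_Leaf r_in; rewrite subn_gt0.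
Qed.

Lemma plugged_branches_rec w :
  plugged_branches w = fpsX * (branch_weight w +
    (plugged_branches (rcons w true) + plugged_branches (rcons w false))).
Proof.
apply: fpsP => -[|[|n]]; rewrite fpsXM // !fpsD /branch_weight fpsCE /=.
  by rewrite !addr0 /plugged_branches BPT_n1 big_mkcond big_seq1.
rewrite add0r /plugged_branches /= big_mkcond big_BPT_Node_split.
rewrite [X in _ + X]big1 ?addr0 => [|i _]; last first.
  apply: big1_seq => l /andP[_ l_in]; apply: big1_seq => r /andP[_ r_in].
  rewrite is_branch_Node //; first exact: BPT_n_neq_Leaf (ltn0Sn _) l_in.
  by apply: BPT_n_neq_Leaf r_in; rewrite subn_gt0.
rewrite addrC !(big_mkcond is_branch); congr (_ + _); apply: eq_big_seq => t t_in.
  by rewrite is_branch_NodeR ?plug_rcons //; exact: BPT_n_neq_Leaf t_in.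
by rewrite is_branch_NodeL ?plug_rcons //; exact: BPT_n_neq_Leaf t_in.
Qed.

(* The series t / (1 - t T(t)) at which B is evaluated. *)
Definition argB : fps K := fpsX * fps_inv1B (fpsX * seriesT tau).

Lemma argB_0 : argB 0%N = 0.
Proof. by rewrite /argB fpsXM. Qed.

Lemma argB_1 : argB 1%N = 1.
Proof. by rewrite /argB fpsXM fps_inv1B0. Qed.

Lemma argBE : argB * (1 - fpsX * seriesT tau) = fpsX.
Proof. by rewrite /argB -mulrA [_ * (1 - _)]mulrC fps_inv1BE ?mulr1 // fpsXM. Qed.

Lemma plugged_trees_argB w :
  plugged_trees w = argB * (branch_weight w +
    (plugged_trees (rcons w true) + plugged_trees (rcons w false))).
Proof.
have rec := plugged_trees_rec w; set c := branch_weight w + _ in rec *.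
rewrite -seriesT_plugged in rec.
have FE : plugged_trees w * (1 - fpsX * seriesT tau) = fpsX * c.
  by rewrite mulrBr mulr1 {1}rec; ring.
rewrite -[LHS]mulr1 -(fps_inv1BE (w := fpsX * seriesT tau)) ?fpsXM // mulrA FE /argB.
ring.
Qed.


Definition words_weight k : fps K := \sum_(v <- words k) branch_weight v.

Lemma seriesT_expansion N : seriesT tau =
  \sum_(k < N) argB ^+ k.+1 * words_weight k
  + argB ^+ N * \sum_(v <- words N) plugged_trees v.
Proof. by rewrite seriesT_plugged (unfold_words plugged_trees_argB N). Qed.

Lemma seriesB_expansion N : seriesB tau =
  \sum_(k < N) fpsX ^+ k.+1 * words_weight k
  + fpsX ^+ N * \sum_(v <- words N) plugged_branches v.
Proof. by rewrite seriesB_plugged (unfold_words plugged_branches_rec N). Qed.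

Lemma seriesT_comp_eqmodX N : eqmodX N (seriesT tau) (fps_comp argB (seriesB tau)).
Proof.
have compX := fps_compX argB_0.
have comp_words_weight k : fps_comp argB (words_weight k) = words_weight k.
  by rewrite rmorph_sum; apply: eq_bigr => v _; apply: fps_compC.
move=> n ltnN; rewrite (seriesT_expansion N) (seriesB_expansion N).
rewrite rmorphD rmorphM rmorphXn rmorph_sum /= compX !fpsD.
under [in RHS]eq_bigr => k _ do rewrite rmorphM rmorphXn /= compX comp_words_weight.
congr (_ + _); rewrite ![argB ^+ N * _]mulrC.
by rewrite !(eqmodXMr _ (eqmodX_exp (k := N) argB_0) ltnN).
Qed.

Theorem seriesT_comp : seriesT tau = fps_comp argB (seriesB tau).
Proof. by apply: fpsP => n; apply: (seriesT_comp_eqmodX (ltnSn n)). Qed.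

End Troupe.

(** * Algebraicity *)

Section BivariateEvaluation.
Variable K : comNzRingType.
Implicit Types (P Q : {poly {poly K}}) (a b f u Y : fps K).

Definition horner2 a Y : {poly {poly K}} -> fps K :=
  horner_eval Y \o map_poly (fps_horner a).
HB.instance Definition _ a Y := GRing.isZmodMorphism.Build {poly {poly K}} (fps K)
  (horner2 a Y) (rmorphB (horner_eval Y \o map_poly (fps_horner a))).
HB.instance Definition _ a Y := GRing.isMonoidMorphism.Build {poly {poly K}} (fps K)
  (horner2 a Y) (rmorphism_monoidP (horner_eval Y \o map_poly (fps_horner a))).

Lemma horner2C a Y p : horner2 a Y p%:P = fps_horner a p.
Proof. by rewrite /horner2 /= map_polyC horner_evalE hornerC. Qed.

Lemma horner2X a Y : horner2 a Y 'X = Y.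
Proof. by rewrite /horner2 /= map_polyX horner_evalE hornerX. Qed.

Lemma horner2_coef a Y P :
  horner2 a Y P = \sum_(i < size P) fps_horner a P`_i * Y ^+ i.
Proof.
rewrite /horner2 /= horner_evalE (@horner_coef_wide _ (size P)).
  by apply: eq_bigr => i _; rewrite coef_map.
exact: size_poly.
Qed.

Lemma fps_eval_horner2 P f : fps_eval P f = horner2 fpsX f P.
Proof.
apply: fpsP => n; rewrite horner2_coef fps_sum; apply: eq_bigr => i _.
by rewrite fps_expE fps_horner_fpsX.
Qed.

Lemma fps_algebraicE f :
  fps_algebraic f <-> exists2 P, P != 0 & horner2 fpsX f P = 0.
Proof.
split=> [[P [P0 Pf]] | [P P0 Pf]]; exists P => //.
  by apply: fpsP => n; rewrite -fps_eval_horner2 Pf.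
by split=> // n; rewrite fps_eval_horner2 Pf.
Qed.

Lemma fps_comp_horner2 u f P : u 0%N = 0 ->
  fps_comp u (horner2 fpsX f P) = horner2 u (fps_comp u f) P.
Proof.
move=> u0; rewrite !horner2_coef rmorph_sum; apply: eq_bigr => i _.
by rewrite rmorphM rmorphXn /= fps_horner_fpsX fps_comp_poly.
Qed.

Lemma map_drop_poly1K P :
  map_poly (horner_eval 0) P = 0 -> 'X%:P * map_poly (drop_poly 1) P = P.
Proof.
move=> P_t0; apply/polyP => j; rewrite coefCM coef_map_id0 ?drop_poly0r // mulrC.
have Pj0 : (P`_j)`_0 = 0.
  have := congr1 (fun R : {poly K} => R`_j) P_t0.
  by rewrite coef_map coef0 /= horner_evalE horner_coef0.
rewrite -[RHS](poly_take_drop 1) [take_poly 1 _](_ : _ = 0) ?add0r //.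
by apply/polyP => -[|k]; rewrite coef_take_poly coef0 // Pj0.
Qed.

Lemma exists_annihilator_at_t0 f P : P != 0 -> horner2 fpsX f P = 0 ->
  exists2 Q, horner2 fpsX f Q = 0 & map_poly (horner_eval 0) Q != 0.
Proof.
suff ind m P' i : P'`_i != 0 -> leq (size P'`_i) m -> horner2 fpsX f P' = 0 ->
    exists2 Q, horner2 fpsX f Q = 0 & map_poly (horner_eval 0) Q != 0.
  by move=> P0; apply: (ind _ P (size P).-1); rewrite -?lead_coefE ?lead_coef_eq0.
elim: m P' i => [|m IHm] Q i Qi0 size_Qi Qf0.
  by move: size_Qi; rewrite leqn0 size_poly_eq0 (negbTE Qi0).
have [Q_t0|] := eqVneq (map_poly (horner_eval 0) Q) 0; last by exists Q.
have QE := map_drop_poly1K Q_t0; set Q' := map_poly _ Q in QE.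
apply: (IHm Q' i).
- by apply: contraNneq Qi0 => Q'i0; rewrite -QE coefCM Q'i0 mulr0.
- by rewrite coef_map_id0 ?drop_poly0r // size_drop_poly leq_subLR add1n.
- by apply: lreg_fpsX; rewrite mulr0 -Qf0 -QE rmorphM /= horner2C fps_hornerX.
Qed.
End BivariateEvaluation.

Section ClearingDenominators.
Variable K : comNzRingType.
Implicit Types (P : {poly {poly K}}) (a b f u Y : fps K).

Definition coef_size_bound P := (\max_(i < size P) size (P`_i)%R).+1.

Lemma size_coef_lt_bound P i : (size (P`_i)%R < coef_size_bound P)%N.
Proof.
rewrite ltnS; case: (ltnP i (size P)) => [lt_iP | le_Pi].
  exact: (@leq_bigmax _ (fun i : 'I_(size P) => size (P`_i)%R) (Ordinal lt_iP)).
by rewrite nth_default // size_poly0.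
Qed.

(* (1 + s t Y)^d P(t / (1 + s t Y), Y), where d bounds the t-degrees of the
   coefficients of P. *)
Definition subst_clear (s : K) P : {poly {poly K}} :=
  let d := coef_size_bound P in
  \sum_(i < size P) \sum_(j < d)
    ((P`_i)`_j)%:P%:P * 'X%:P ^+ j * (1 + (s%:P * 'X)%:P * 'X) ^+ (d - j) * 'X ^+ i.

Lemma horner2_subst_clear s P a b Y : a = b * (1 + fpsC s * a * Y) ->
  horner2 a Y (subst_clear s P) =
  (1 + fpsC s * a * Y) ^+ coef_size_bound P * horner2 b Y P.
Proof.
set d := coef_size_bound P; set z := 1 + _ => a_eq.
have hz : horner2 a Y (1 + (s%:P * 'X)%:P * 'X) = z.
  by rewrite rmorphD rmorph1 rmorphM /= horner2X horner2C rmorphM /= fps_hornerC fps_hornerX.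
rewrite /subst_clear rmorph_sum (horner2_coef b) mulr_sumr; apply: eq_bigr => i _.
rewrite /= rmorph_sum (fps_horner_coef _ (ltnW (size_coef_lt_bound _ _))).
rewrite mulr_suml mulr_sumr; apply: eq_bigr => j _.
rewrite 3!rmorphM !rmorphXn /= hz !horner2C fps_hornerC fps_hornerX horner2X -/d.
have -> : a ^+ j = b ^+ j * z ^+ j by rewrite {1}a_eq exprMn.
have -> : z ^+ d = z ^+ j * z ^+ (d - j) by rewrite -exprD subnKC // ltnW.
ring.
Qed.

Lemma subst_clear_at_t0 s P :
  map_poly (horner_eval 0) (subst_clear s P) = map_poly (horner_eval 0) P.
Proof.
have t0C (c : {poly K}) : map_poly (horner_eval 0) c%:P = (c.[0])%:P by rewrite map_polyC.
have t0t : map_poly (horner_eval 0) ('X%:P : {poly {poly K}}) = 0.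
  by rewrite t0C hornerX.
have t0Z : map_poly (horner_eval 0) (1 + (s%:P * 'X)%:P * 'X) = 1.
  by rewrite rmorphD rmorph1 rmorphM /= t0C hornerM hornerX mulr0 mul0r addr0.
rewrite /subst_clear; move: (1 + _ * 'X) t0Z => Z t0Z.
rewrite -[in RHS](coefK P) poly_def !rmorph_sum /=; apply: eq_bigr => i _.
rewrite rmorph_sum /= /coef_size_bound big_ord_recl [X in _ + X]big1 ?addr0 => [|j _].
  rewrite subn0 expr0 mulr1 -mul_polyC !rmorphM rmorphXn /= t0Z expr1n mulr1.
  by rewrite !t0C hornerC horner_coef0.
by rewrite !rmorphM !rmorphXn /= t0t expr0n /= mulr0 !mul0r.
Qed.

Lemma subst_clear_neq0 s P :
  map_poly (horner_eval 0) P != 0 -> subst_clear s P != 0.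
Proof. by rewrite -(subst_clear_at_t0 s); apply: contraNneq => ->; rewrite rmorph0. Qed.

Lemma fps_algebraic_comp u f : u 0%N = 0 -> GRing.lreg (u 1%N) ->
  u * (1 - fpsX * fps_comp u f) = fpsX ->
  fps_algebraic f <-> fps_algebraic (fps_comp u f).
Proof.
move=> u0 u_reg uE; rewrite !fps_algebraicE.
split=> -[P P0 Pf0]; have [Q Qf0 Q_t0] := exists_annihilator_at_t0 P0 Pf0.
- exists (subst_clear (-1) Q); first exact: subst_clear_neq0.
  rewrite (horner2_subst_clear _ (b := u)) -?fps_comp_horner2 ?Qf0 ?rmorph0 ?mulr0 //.
  by rewrite rmorphN1 mulN1r mulNr uE.
- exists (subst_clear 1 Q); first exact: subst_clear_neq0.
  apply: (fps_comp_eq0 u0 u_reg).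
  rewrite fps_comp_horner2 // (horner2_subst_clear _ (b := fpsX)) ?Qf0 ?mulr0 //.
  by rewrite rmorph1 mul1r mulrDr mulr1 -{1}uE mulrBr mulr1 mulrCA subrK.
Qed.

End ClearingDenominators.

Theorem corollary5p2 (K : comNzRingType) (tau : bpt -> K) :
  weighted_troupe tau ->
  (fps_algebraic (seriesB tau) <-> fps_algebraic (seriesT tau)).
Proof.
move=> tau_troupe; have T_compB := seriesT_comp tau_troupe.
rewrite T_compB; apply: fps_algebraic_comp.
- exact: argB_0.
- by rewrite argB_1; apply: lreg1.
- by rewrite -T_compB; apply: argBE.
Qed.
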